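(* Let $R=(V,(\rho_i)_{i\in I})$ be a relational structure and $A\subseteq V$. Then: (1) for every monomorphic decomposition $(V_j)_{j\in J}$ of $R$, the non-empty sets among $A\cap V_j$ ($j\in J$) form a monomorphic decomposition of $R_{\restriction A}$; (2) if $R$ has a monomorphic decomposition into finitely many classes and $R$ embeds into $R_{\restriction A}$, then for each class $C$ of $\mathbf M(R)$, the set $A\cap C$ is a class of $\mathbf M(R_{\restriction A})$ and $|A\cap C|=|C|$.
   Context: A relational structure $R=(V,(\rho_i)_{i\in I})$ consists of a set $V$ and relations $\rho_i\subseteq V^{n_i}$, $n_i$ non-negative integers. For $A\subseteq V$, $R_{\restriction A}=(A,(\rho_i\cap A^{n_i})_{i\in I})$. An isomorphism between structures with the same signature is a bijection preserving each relation in both directions; $R$ embeds into $R'$ if $R$ is isomorphic to a restriction of $R'$. A monomorphic decomposition of $R$ is a partition $(V_j)_{j\in J}$ of $V$ into non-empty sets such that for all finite $F,F'\subseteq V$ with $|F\cap V_j|=|F'\cap V_j|$ for every $j\in J$, the restrictions $R_{\restriction F}$ and $R_{\restriction F'}$ are isomorphic. For $x,y\in V$ write $x\simeq_R y$ if for every finite $F\subseteq V\setminus\{x,y\}$ the restrictions $R_{\restriction F\cup\{x\}}$ and $R_{\restriction F\cup\{y\}}$ are isomorphic. It is known that $\simeq_R$ is an equivalence relation whose classes form a monomorphic decomposition of $R$ of which every monomorphic decomposition of $R$ is a refinement; this partition is the canonical decomposition $\mathbf M(R)$. *)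

From mathcomp Require Import all_boot.
From Stdlib Require Import List.

Set Implicit Arguments.
Unset Strict Implicit.
Unset Printing Implicit Defensive.

Record relstr (I : Type) (ar : I -> nat) := RelStr {
  carrier :> Type;
  rel : forall i : I, ('I_(ar i) -> carrier) -> Prop
}.

Arguments relstr : clear implicits.
Arguments RelStr {I ar} carrier rel.
Arguments rel {I ar} r i _.

Definition restr I ar (R : relstr I ar) (A : R -> Prop) : relstr I ar :=
  RelStr {x : R | A x} (fun i t => rel R i (fun k => sval (t k))).

Arguments restr {I ar} R A.

Definition isomorphic I ar (R S : relstr I ar) : Prop :=
  exists f : R -> S, bijective f /\
    forall i (t : 'I_(ar i) -> R), rel R i t <-> rel S i (fun k => f (t k)).

Definition embeds I ar (R S : relstr I ar) : Prop :=
  exists A : S -> Prop, isomorphic R (restr S A).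

Definition finite_set (T : Type) (F : T -> Prop) : Prop :=
  exists s : list T, forall x, F x -> List.In x s.

Definition equipotent (S T : Type) : Prop := exists f : S -> T, bijective f.

Definition mono_decomp I ar (R : relstr I ar) (J : Type) (P : J -> R -> Prop)
  : Prop :=
  [/\ (forall j, exists x, P j x),
      (forall x, exists j, P j x),
      (forall j j' x, P j x -> P j' x -> j = j') &
      (forall F F' : R -> Prop, finite_set F -> finite_set F' ->
         (forall j, equipotent {x | F x /\ P j x} {x | F' x /\ P j x}) ->
         isomorphic (restr R F) (restr R F'))].

Arguments mono_decomp {I ar} R {J} P.

Definition simeq I ar (R : relstr I ar) (x y : R) : Prop :=
  forall F : R -> Prop, finite_set F -> (forall z, F z -> z <> x /\ z <> y) ->
    isomorphic (restr R (fun z => F z \/ z = x)) (restr R (fun z => F z \/ z = y)).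

Arguments simeq {I ar} R x y.

(* C is a class of the canonical decomposition M(R), i.e. an equivalence
   class of ≃_R. *)
Definition M_class I ar (R : relstr I ar) (C : R -> Prop) : Prop :=
  exists x : R, forall y : R, C y <-> simeq R x y.

Arguments M_class {I ar} R C.
Arguments isomorphic {I ar} R S.
Arguments embeds {I ar} R S.

From Pilot Require Import Defs.
From mathcomp Require Import all_boot.
From mathcomp Require classical_sets cardinality.
From Stdlib Require Import Classical ClassicalEpsilon ProofIrrelevance.
From Stdlib Require Import FunctionalExtensionality.

Set Implicit Arguments.
Unset Strict Implicit.
Unset Printing Implicit Defensive.

(* Part (1) is bookkeeping: a monomorphic decomposition restricts block by
   block.  For (2), let g be the self-embedding R -> R|A -> R.  Embeddings
   reflect ≃, and ≃-classes are unions of the finitely many blocks, so a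
   pigeonhole argument on the blocks visited by the g-orbits of x and y gives
   one n > 0 with x ≃ g^n x and y ≃ g^n y; hence g also preserves ≃ and g^n
   maps every class into itself.  So every class C meets A, ≃ on R|A is the
   trace of ≃ on R there, and g^n injects C into A ∩ C: |A ∩ C| = |C| by
   Cantor-Bernstein. *)

Lemma sval_inj (T : Type) (P : T -> Prop) : injective (@sval T P).
Proof. by apply: eq_sig_hprop => x p q; apply: proof_irrelevance. Qed.

Lemma exists_bij_sig_image (T U : Type) (D1 : T -> Prop) (D2 : U -> Prop)
    (phi : T -> U) :
  injective phi -> (forall y, D2 y <-> exists2 x, D1 x & phi x = y) ->
  exists f : {x | D1 x} -> {y | D2 y},
    bijective f /\ forall s, sval (f s) = phi (sval s).
Proof.
move=> phi_inj D2E.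
have D2phi x : D1 x -> D2 (phi x) by move=> D1x; apply/D2E; exists x.
have preim (t : {y | D2 y}) : exists s : {x | D1 x}, phi (sval s) = sval t.
  by have [x D1x <-] := proj1 (D2E _) (svalP t); exists (exist _ x D1x).
pose inv t := sval (constructive_indefinite_description _ (preim t)).
have invK t : phi (sval (inv t)) = sval t.
  exact: svalP (constructive_indefinite_description _ (preim t)).
exists (fun s => exist _ (phi (sval s)) (D2phi _ (svalP s))); split=> //.
by exists inv => [s|t]; apply: sval_inj => //=; apply: phi_inj; rewrite invK.
Qed.

Lemma equipotent_sig_image (T U : Type) (D1 : T -> Prop) (D2 : U -> Prop)
    (phi : T -> U) :
  injective phi -> (forall y, D2 y <-> exists2 x, D1 x & phi x = y) ->
  equipotent {x | D1 x} {y | D2 y}.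
Proof.
by move=> phi_inj D2E; have [f [f_bij _]] := exists_bij_sig_image phi_inj D2E; exists f.
Qed.

Lemma equipotent_sym (S T : Type) : equipotent S T -> equipotent T S.
Proof. by move=> [f [g fK gK]]; exists g; exists f. Qed.

Lemma equipotent_trans (S T U : Type) :
  equipotent S T -> equipotent T U -> equipotent S U.
Proof. by move=> [f f_bij] [g g_bij]; exists (g \o f); apply: bij_comp. Qed.

Lemma equipotent_empty (S T : Type) :
  (S -> False) -> (T -> False) -> equipotent S T.
Proof.
move=> S0 T0; exists (fun s => match S0 s with end).
by exists (fun t => match T0 t with end) => [s|t]; [case: (S0 s) | case: (T0 t)].
Qed.

Lemma equipotent_involution (T : Type) (s : T -> T) (D1 D2 : T -> Prop) :
  involutive s -> (forall w, D1 w -> D2 (s w)) -> (forall w, D2 w -> D1 (s w)) ->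
  equipotent {w | D1 w} {w | D2 w}.
Proof.
move=> sK D12 D21; apply: (equipotent_sig_image (inv_inj sK)) => w.
by split=> [/D21 D1sw|[v /D12 D2sv <-]] //; exists (s w); rewrite ?sK.
Qed.

Lemma equipotent_sub_inj (T : Type) (X Y : T -> Prop) (h : T -> T) :
  (forall x, Y x -> X x) -> (forall x, X x -> Y (h x)) -> injective h ->
  equipotent {x | Y x} {x | X x}.
Proof.
move=> YX hXY h_inj.
have /cardinality.card_bijP [f f_bij] : cardinality.card_eq Y X.
  apply: cardinality.Cantor_Bernstein; first exact: cardinality.subset_card_le.
  have hX : cardinality.card_eq (classical_sets.image X h) X.
    by apply: cardinality.inj_card_eq => x y _ _ /h_inj.
  rewrite -(cardinality.card_le_eql hX); apply: cardinality.subset_card_le.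
  by move=> _ [x Xx <-]; apply: hXY.
have set_typeE (Z : T -> Prop) : equipotent {x | Z x} (classical_sets.set_type Z).
  exists (fun x => exist _ (sval x) (classical_sets.mem_set (svalP x))).
  by exists (fun x => exist _ (sval x) (classical_sets.set_mem (svalP x)))
    => x; apply: sval_inj.
apply: equipotent_trans (set_typeE Y) _.
exact: equipotent_trans (ex_intro _ f f_bij) (equipotent_sym (set_typeE X)).
Qed.

Lemma finite_set_sub (T : Type) (F G : T -> Prop) :
  finite_set F -> (forall x, G x -> F x) -> finite_set G.
Proof. by move=> [s Fs] GF; exists s => x /GF /Fs. Qed.

Lemma finite_set_add (T : Type) (F : T -> Prop) (x : T) :
  finite_set F -> finite_set (fun z => F z \/ z = x).
Proof. by move=> [s Fs]; exists (x :: s) => z [/Fs|->]; [right | left]. Qed.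

Lemma finite_set_image (T U : Type) (F : T -> Prop) (phi : T -> U) :
  finite_set F -> finite_set (fun z => exists2 w, F w & phi w = z).
Proof.
by move=> [s Fs]; exists (List.map phi s) => _ [w /Fs Fw <-]; apply: List.in_map.
Qed.

Definition swap (T : Type) (x y w : T) : T :=
  if excluded_middle_informative (w = x) then y
  else if excluded_middle_informative (w = y) then x else w.

Lemma swapL (T : Type) (x y : T) : swap x y x = y.
Proof. by rewrite /swap; case: excluded_middle_informative. Qed.

Lemma swapD (T : Type) (x y w : T) : w <> x -> w <> y -> swap x y w = w.
Proof. by rewrite /swap; do 2 case: excluded_middle_informative. Qed.

Lemma swapC (T : Type) (x y : T) : swap x y =1 swap y x.
Proof.
by move=> w; rewrite /swap; repeat case: excluded_middle_informative => ? /=; congruence.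
Qed.

Lemma swapK (T : Type) (x y : T) : involutive (swap x y).
Proof.
by move=> w; rewrite /swap; repeat case: excluded_middle_informative => ? /=; congruence.
Qed.

Section Embeddings.
Variables (I : Type) (ar : I -> nat).
Implicit Types R S : relstr I ar.

Definition embedding R S (phi : R -> S) : Prop :=
  injective phi /\
  forall i (t : 'I_(ar i) -> R), Defs.rel R i t <-> Defs.rel S i (fun k => phi (t k)).

Lemma isomorphic_refl R : isomorphic R R.
Proof. by exists id; split=> //; exists id. Qed.

Lemma isomorphic_sym R S : isomorphic R S -> isomorphic S R.
Proof.
move=> [f [[g fK gK] f_rel]]; exists g; split; first by exists f.
move=> i t; rewrite f_rel.
by have -> : (fun k => f (g (t k))) = t by apply: functional_extensionality => k.
Qed.

Lemma isomorphic_trans R S (T : relstr I ar) :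
  isomorphic R S -> isomorphic S T -> isomorphic R T.
Proof.
move=> [f [f_bij f_rel]] [g [g_bij g_rel]].
by exists (g \o f); split=> [|i t]; [apply: bij_comp | rewrite f_rel g_rel].
Qed.

Lemma embedding_comp R S (T : relstr I ar) (phi : R -> S) (psi : S -> T) :
  embedding phi -> embedding psi -> embedding (psi \o phi).
Proof.
move=> [phi_inj phi_rel] [psi_inj psi_rel].
by split=> [|i t]; [apply: inj_comp | rewrite phi_rel psi_rel].
Qed.

Lemma embedding_sval R (A : R -> Prop) : embedding (fun y : restr R A => sval y).
Proof. by split=> //; apply: sval_inj. Qed.

Lemma embeds_embedding R S : embeds R S -> exists phi : R -> S, embedding phi.
Proof.
move=> [B [f [f_bij f_rel]]]; exists (fun x => sval (f x)).
exact: (embedding_comp (conj (bij_inj f_bij) f_rel) (embedding_sval B)).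
Qed.

Lemma isomorphic_restr_embedding R S (phi : R -> S) (D1 : R -> Prop)
    (D2 : S -> Prop) :
  embedding phi -> (forall y, D2 y <-> exists2 x, D1 x & phi x = y) ->
  isomorphic (restr R D1) (restr S D2).
Proof.
move=> [phi_inj phi_rel] D2E.
have [f [f_bij f_val]] := exists_bij_sig_image phi_inj D2E.
exists f; split=> // i t /=.
have -> : (fun k => sval (f (t k))) = (fun k => phi (sval (t k))).
  by apply: functional_extensionality => k.
exact: phi_rel.
Qed.

Lemma isomorphic_restr_ext R (D D' : R -> Prop) :
  (forall x, D x <-> D' x) -> isomorphic (restr R D) (restr R D').
Proof.
move=> DD'; apply: (isomorphic_restr_embedding (phi := id)) => [|y]; first by split.
by split=> [/DD' Dy|[x /DD' Dx <-]] //; exists y.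
Qed.

End Embeddings.

Section Simeq.
Variables (I : Type) (ar : I -> nat).
Implicit Types R S : relstr I ar.

Lemma simeq_refl R (x : R) : simeq R x x.
Proof. by move=> F _ _; apply: isomorphic_refl. Qed.

Lemma simeq_sym R (x y : R) : simeq R x y -> simeq R y x.
Proof.
by move=> xy F finF F_avoid; apply/isomorphic_sym/xy => // z /F_avoid [].
Qed.

Lemma simeq_trans R (x y z : R) : simeq R x y -> simeq R y z -> simeq R x z.
Proof.
move=> xy yz F finF F_avoid.
have [<-|nxz] := classic (x = z); first exact: isomorphic_refl.
have [exy|nxy] := classic (x = y); first by subst y; apply: yz.
have [eyz|nyz] := classic (y = z); first by subst z; apply: xy.
have [Fy|nFy] := classic (F y); last first.
  have F_avoid_y w : F w -> w <> y by move=> Fw wy; apply: nFy; rewrite -wy.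
  apply: isomorphic_trans (xy F finF _) (yz F finF _);
    by move=> w Fw; have [] := F_avoid w Fw; split=> //; apply: F_avoid_y.
(* With G = F \ {y}:  F+x = G+x+y ~ G+x+z = G+z+x ~ G+z+y = F+z. *)
pose G w := F w /\ w <> y.
have finG : finite_set G by apply: finite_set_sub finF _ => w [].
have F_split u w : F w \/ w = u <-> (G w \/ w = u) \/ w = y.
  by rewrite /G; have [->|] := classic (w = y); intuition.
apply: isomorphic_trans (isomorphic_restr_ext (F_split x)) _.
apply: isomorphic_trans (yz (fun w => G w \/ w = x) (finite_set_add x finG) _) _.
  by move=> w [[/F_avoid [] ? ? ?]|->].
apply: isomorphic_trans (isomorphic_restr_ext (_ : forall w,
  (G w \/ w = x) \/ w = z <-> (G w \/ w = z) \/ w = x)) _; first by intuition.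
apply: isomorphic_trans (xy (fun w => G w \/ w = z) (finite_set_add z finG) _) _.
  by move=> w [[/F_avoid [] ? ? ?]|->]; split=> // e; [apply: nxz | apply: nyz].
by apply: isomorphic_restr_ext => w; rewrite F_split.
Qed.

Lemma embedding_simeq R S (phi : R -> S) (x y : R) :
  embedding phi -> simeq S (phi x) (phi y) -> simeq R x y.
Proof.
move=> phi_emb xy F finF F_avoid; have [phi_inj _] := phi_emb.
pose F' z := exists2 w, F w & phi w = z.
have restr_add u : isomorphic (restr R (fun z => F z \/ z = u))
                              (restr S (fun z => F' z \/ z = phi u)).
  apply: (isomorphic_restr_embedding phi_emb) => z; split.
    by case=> [[w Fw <-]|->]; [exists w => //; left | exists u => //; right].
  by case=> w [Fw|->] <-; [left; exists w | right].
apply: isomorphic_trans (restr_add x) _.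
apply: isomorphic_trans (isomorphic_sym (restr_add y)).
apply: xy; first exact: finite_set_image.
by move=> _ [w /F_avoid [nwx nwy] <-]; split=> /phi_inj.
Qed.

Lemma block_simeq R (J : Type) (P : J -> R -> Prop) :
  mono_decomp R P -> forall j x y, P j x -> P j y -> simeq R x y.
Proof.
case=> _ _ P_uniq P_mono j x y Px Py F finF F_avoid.
apply: P_mono; try exact: finite_set_add.
(* The transposition of x and y matches F+x with F+y block by block. *)
move=> k; pose D u w := (F w \/ w = u) /\ P k w.
have D_swap u v : P j u -> P j v -> (forall w, F w -> w <> u /\ w <> v) ->
    forall w, D u w -> D v (swap u v w).
  move=> Pu Pv uv_avoid w [[Fw|->] Pkw]; last first.
    by rewrite swapL; split; [right | rewrite (P_uniq _ _ _ Pkw Pu)].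
  by have [wu wv] := uv_avoid w Fw; rewrite swapD //; split=> //; left.
apply: (equipotent_involution (swapK x y)); first exact: D_swap.
move=> w; rewrite swapC; apply: D_swap => // z /F_avoid [].
by split.
Qed.

End Simeq.

Lemma mono_decomp_restr (I : Type) (ar : I -> nat) (R : relstr I ar)
    (A : R -> Prop) (J : Type) (P : J -> R -> Prop) :
  mono_decomp R P ->
  mono_decomp (restr R A)
    (fun (j : {j : J | exists x, A x /\ P j x}) (y : restr R A) =>
       P (sval j) (sval y)).
Proof.
case=> _ P_cover P_uniq P_mono; split.
- by move=> [j [x [Ax Pjx]]]; exists (exist _ x Ax).
- move=> [x Ax]; have [j Pjx] := P_cover x.
  by exists (exist _ j (ex_intro _ x (conj Ax Pjx))).
- by move=> [j ?] [j' ?] y /= Pj Pj'; apply: sval_inj; apply: P_uniq Pj Pj'.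
move=> F F' finF finF' FF'.
pose lift (G : restr R A -> Prop) x := exists2 y, G y & sval y = x.
have lift_iso G : isomorphic (restr (restr R A) G) (restr R (lift G)).
  by apply: (isomorphic_restr_embedding (embedding_sval A)).
apply: isomorphic_trans (lift_iso F) (isomorphic_trans _ (isomorphic_sym (lift_iso F'))).
apply: P_mono; try exact: finite_set_image.
move=> j; have [Aj|nAj] := classic (exists x, A x /\ P j x); last first.
  by apply: equipotent_empty => -[_ [[[x Ax] _ <-] Pjx]]; apply: nAj; exists x.
have lift_block G : equipotent {y | G y /\ P j (sval y)} {x | lift G x /\ P j x}.
  apply: (equipotent_sig_image (sval_inj (P := A))) => x.
  by split=> [[[y Gy <-] Pjy]|[y [Gy Pjy] <-]]; [exists y | split=> //; exists y].
apply: equipotent_trans (equipotent_sym (lift_block F)) _.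
exact: equipotent_trans (FF' (exist _ j Aj)) (lift_block F').
Qed.

Section ReflectingSelfMap.
Variables (T : Type) (E : T -> T -> Prop).
Hypotheses (E_sym : forall x y, E x y -> E y x)
           (E_trans : forall x y z, E x y -> E y z -> E x z).
Variables (J : finType) (Q : J -> T -> Prop).
Hypotheses (Q_cover : forall x, exists j, Q j x)
           (Q_E : forall j x y, Q j x -> Q j y -> E x y).
Variable g : T -> T.
Hypothesis g_reflect : forall x y, E (g x) (g y) -> E x y.

Lemma iter_reflect n x y : E (iter n g x) (iter n g y) -> E x y.
Proof. by elim: n => [|n IHn] //= /g_reflect /IHn. Qed.

Lemma exists_common_return x y :
  exists n, E x (iter n.+1 g x) /\ E y (iter n.+1 g y).
Proof.
pose blk z := sval (constructive_indefinite_description _ (Q_cover z)).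
have blkP z : Q (blk z) z := svalP (constructive_indefinite_description _ (Q_cover z)).
pose p (i : 'I_#|{: J * J}|.+1) := (blk (iter i g x), blk (iter i g y)).
have /injectivePn [i [i' neq_ii' p_ii']] : ~~ injectiveb p.
  by apply/injectiveP => /leq_card; rewrite card_ord ltnn.
wlog lt_ii' : i i' neq_ii' p_ii' / i < i'.
  move=> IH; case: (ltngtP i i') => [|lt_i'i|/val_inj eq_ii']; first exact: IH.
    by apply: (IH i' i) => //; rewrite eq_sym.
  by rewrite eq_ii' eqxx in neq_ii'.
exists (i' - i).-1; rewrite prednK ?subn_gt0 //.
have iter_i' z : iter i' g z = iter i g (iter (i' - i) g z).
  by rewrite -iterD subnKC // ltnW.
case: p_ii' => blk_x blk_y; split; apply: (@iter_reflect i); rewrite -iter_i'.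
  by apply: Q_E (blkP _) _; rewrite blk_x; apply: blkP.
by apply: Q_E (blkP _) _; rewrite blk_y; apply: blkP.
Qed.

Lemma reflecting_map_preserves x y : E x y -> E (g x) (g y).
Proof.
move=> xy; have [n [x_ret y_ret]] := exists_common_return x y.
apply: (@iter_reflect n); rewrite -!iterSr.
exact: E_trans (E_sym x_ret) (E_trans xy y_ret).
Qed.

Lemma iter_preserves n x y : E x y -> E (iter n g x) (iter n g y).
Proof. by elim: n => [|n IHn] //= /IHn /reflecting_map_preserves. Qed.

End ReflectingSelfMap.

Section SelfEmbedding.
Variables (I : Type) (ar : I -> nat) (R : relstr I ar) (A : R -> Prop).
Variables (J : finType) (P : J -> R -> Prop).
Hypothesis P_decomp : mono_decomp R P.
Variable phi : R -> restr R A.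
Hypothesis phi_emb : embedding phi.

Let g x := sval (phi x).

Let sval_reflect (u v : restr R A) : simeq R (sval u) (sval v) -> simeq (restr R A) u v.
Proof. exact: embedding_simeq (embedding_sval A). Qed.

Let g_reflect x y : simeq R (g x) (g y) -> simeq R x y.
Proof. exact: embedding_simeq (embedding_comp phi_emb (embedding_sval A)). Qed.

Let P_cover x : exists j, P j x.
Proof. by case: P_decomp. Qed.

Let g_return x : exists n, simeq R x (iter n.+1 g x).
Proof.
have [n [x_ret _]] := exists_common_return P_cover (block_simeq P_decomp) g_reflect x x.
by exists n.
Qed.

Let g_preserve n x y : simeq R x y -> simeq R (iter n g x) (iter n g y).
Proof.
exact: (iter_preserves (@simeq_sym _ _ R) (@simeq_trans _ _ R)
  P_cover (block_simeq P_decomp) g_reflect).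
Qed.

Lemma M_class_restr (C : R -> Prop) :
  M_class R C -> M_class (restr R A) (fun y => C (sval y)).
Proof.
case=> x0 CE; have [n x0_ret] := g_return x0.
exists (phi (iter n g x0)) => z; rewrite CE; split=> [x0z|uz].
  by apply: sval_reflect; apply: simeq_trans (simeq_sym x0_ret) x0z.
have [n' z_ret] := g_return (sval z); set v := iter n' g (sval z) in z_ret.
have zv : simeq (restr R A) z (phi v) by apply: sval_reflect.
have uv : simeq R (iter n g x0) v.
  exact: embedding_simeq phi_emb (simeq_trans uz zv).
have guv : simeq R (g (iter n g x0)) (g v) := @g_preserve 1 _ _ uv.
exact: simeq_trans x0_ret (simeq_trans guv (simeq_sym z_ret)).
Qed.

Lemma class_restr_equipotent (C : R -> Prop) :
  M_class R C -> equipotent {x | A x /\ C x} {x | C x}.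
Proof.
case=> x0 CE; have [n x0_ret] := g_return x0.
apply: (@equipotent_sub_inj _ _ _ (iter n.+1 g)) => [x [] //|x /CE Cx|].
  split; first exact: svalP.
  by apply/CE; apply: simeq_trans x0_ret (@g_preserve n.+1 _ _ Cx).
have g_inj : injective g by move=> x y /sval_inj /phi_emb.1.
by elim: n.+1 => [|m IHm] //= x y /g_inj /IHm.
Qed.

End SelfEmbedding.

Theorem proposition4p3 (I : Type) (ar : I -> nat) (R : relstr I ar)
  (A : R -> Prop) :
  (forall (J : Type) (P : J -> R -> Prop), mono_decomp R P ->
     mono_decomp (restr R A)
       (fun (j : {j : J | exists x, A x /\ P j x}) (y : restr R A) =>
          P (sval j) (sval y)))
  /\
  ((exists (J : finType) (P : J -> R -> Prop), mono_decomp R P) ->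
   embeds R (restr R A) ->
   forall C : R -> Prop, M_class R C ->
     M_class (restr R A) (fun y : restr R A => C (sval y)) /\
     equipotent {x : R | A x /\ C x} {x : R | C x}).
Proof.
split=> [J P|[J [P P_decomp]] /embeds_embedding [phi phi_emb] C C_class].
  exact: mono_decomp_restr.
exact (conj (M_class_restr P_decomp phi_emb C_class)
            (class_restr_equipotent P_decomp phi_emb C_class)).
Qed.
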